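(* Let $f=\sum_{J\in\mathbb{N}^n} a_J x^J$ be a nonzero real polynomial with all coefficients $a_J\in\{0,1\}$, let $\mathcal{M}$ be the set of exponent vectors $P$ with $a_P=1$, and fix an integer $k\ge 0$. Let $M$ be the matrix whose rows are indexed by the vectors $I\in\{0,1\}^n$ with $|I|=k$, whose columns are indexed by the finitely many $J\in\mathbb{N}^n$ such that $I+J\in\mathcal{M}$ for some such $I$, and whose entries are $M_{I,J}=a_{I+J}$. Let $B=M^T M$. Then $$\mathrm{Tr}(B^2)\leq |\mathcal{M}|^2\sum_{P \in \mathcal{M}} \binom{\sup(P)}{k}.$$
   Context: For $\alpha\in\mathbb{N}^n$, $x^\alpha = x_1^{\alpha_1}\cdots x_n^{\alpha_n}/(\alpha_1!\cdots\alpha_n!)$ (scaled monomial basis). For $I\in\{0,1\}^n$, $|I|=\sum_i I_i$. For $P\in\mathbb{N}^n$, $\sup(P)$ is the number of indices $i$ with $P_i>0$. *)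

From HB Require Import structures.
From mathcomp Require Import all_boot all_order all_algebra.
From mathcomp Require Import mpoly.
Set Implicit Arguments. Unset Strict Implicit. Unset Printing Implicit Defensive.
Import Order.TTheory GRing.Theory Num.Theory.
Local Open Scope ring_scope.

(* Coefficient a_J of f in the scaled monomial basis x^J / (J_1! ... J_n!):
   f = sum_J f@_J * prod x_i^{J_i} = sum_J (J! f@_J) * (x^J / J!). *)
Definition scoef {R : realFieldType} {n : nat} (f : {mpoly R[n]}) (J : 'X_{1..n}) : R :=
  (\prod_(i < n) (J i)`!)%N%:R * f@_J.

Definition Mset {R : realFieldType} {n : nat} (f : {mpoly R[n]}) : seq 'X_{1..n} :=
  [seq P <- msupp f | scoef f P == 1].

Definition bin_mnm {n : nat} (b : {ffun 'I_n -> bool}) : 'X_{1..n} :=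
  [multinom (nat_of_bool (b i)) | i < n].

Definition rowsI (n k : nat) : seq 'X_{1..n} :=
  [seq I <- map (@bin_mnm n) (enum {ffun 'I_n -> bool}) | (mdeg I == k)%N].

Definition colsJ {R : realFieldType} {n : nat} (f : {mpoly R[n]}) (k : nat)
  : seq 'X_{1..n} :=
  undup [seq J <- [seq (P - Ir)%MM | P <- Mset f, Ir <- rowsI n k]
        | has (fun Ir => (Ir + J)%MM \in Mset f) (rowsI n k)].

Definition Mmat {R : realFieldType} {n : nat} (f : {mpoly R[n]}) (k : nat)
  : 'M[R]_(size (rowsI n k), size (colsJ f k)) :=
  \matrix_(i, j) scoef f (nth 0%MM (rowsI n k) i + nth 0%MM (colsJ f k) j)%MM.

Definition msup {n : nat} (P : 'X_{1..n}) : nat := #|[set i : 'I_n | (0 < P i)%N]|.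

From HB Require Import structures.
From mathcomp Require Import all_boot all_order all_algebra.
From mathcomp Require Import mpoly.
Import Order.TTheory GRing.Theory Num.Theory.

(* M is a 0/1 matrix whose row and column sums are at most m = |M|, because
   I + J in M determines J from I and I from J.  Hence every entry of B = M^T M
   lies in [0, m], so Tr(B^2) = sum B_JL^2 <= m sum B_JL = m sum_I r_I^2
   <= m^2 sum_I r_I, where r_I are the row sums of M.  Finally the number
   sum_I r_I of ones in M is at most sum_P #{I | I <= P}, and a 0/1 vector
   I <= P of weight k is the indicator of a k-subset of the support of P. *)

Lemma sum_nat_of_bool (T : Type) (s : seq T) (a : pred T) :
  (\sum_(x <- s) (a x : nat))%N = count a s.
Proof. by elim: s => [|x s IH]; rewrite ?big_nil ?big_cons //= IH. Qed.

Lemma count_inj_mem_le (T U : eqType) (h : T -> U) (s : seq T) (S : seq U) :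
  injective h -> uniq s -> (count (fun x => h x \in S) s <= size S)%N.
Proof.
move=> h_inj us; rewrite -size_filter -(size_map h).
apply: uniq_leq_size; first by rewrite map_inj_uniq ?filter_uniq.
by move=> y /mapP [x]; rewrite mem_filter => /andP [hx _] ->.
Qed.

Lemma count_mem_uniq_sum (T U : eqType) (g : T -> U) (s : seq T) (S : seq U) :
  uniq S -> count (fun x => g x \in S) s = (\sum_(P <- S) count (fun x => g x == P) s)%N.
Proof.
move=> uS; rewrite -sum_nat_of_bool.
under eq_bigr => x _ do rewrite -(count_uniq_mem _ uS) -sum_nat_of_bool.
rewrite exchange_big; apply: eq_bigr => P _.
by rewrite -sum_nat_of_bool; apply: eq_bigr => x _; rewrite eq_sym.
Qed.

Section Multinomials.
Context {n : nat}.
Implicit Types (I J P : 'X_{1..n}) (r c S : seq 'X_{1..n}).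

Lemma addm_eq I J P :
  ((I + J)%MM == P) = (I <= P)%MM && (J == (P - I)%MM).
Proof.
apply/eqP/andP => [<- | [leIP /eqP ->]]; last by rewrite addmC submK.
by rewrite lem_addr addmC addmK.
Qed.

Lemma count_addm_eq_le I P c :
  uniq c -> (count (fun J => (I + J)%MM == P) c <= (I <= P)%MM)%N.
Proof.
move=> uc; under eq_count => J do rewrite addm_eq.
case: (I <= P)%MM; last by rewrite count_pred0.
by rewrite (count_uniq_mem _ uc) leq_b1.
Qed.

(* Each P in S arises as I + J for at most one J per I, and only if I <= P. *)
Lemma sum_count_addm_mem_le r c S : uniq c -> uniq S ->
  (\sum_(I <- r) count (fun J => (I + J)%MM \in S) c <=
   \sum_(P <- S) count (fun I => (I <= P)%MM) r)%N.
Proof.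
move=> uc uS; under eq_bigr => I _ do rewrite count_mem_uniq_sum //.
rewrite exchange_big; apply: leq_sum => P _.
rewrite -sum_nat_of_bool; apply: leq_sum => I _.
exact: count_addm_eq_le.
Qed.

Lemma bin_mnm_inj : injective (@bin_mnm n).
Proof.
move=> b b' eq_bb'; apply/ffunP => i.
have := congr1 (fun m : 'X_{1..n} => m i) eq_bb'; rewrite !mnmE.
by case: (b i); case: (b' i).
Qed.

Lemma rowsI_uniq k : uniq (rowsI n k).
Proof. by rewrite filter_uniq // map_inj_uniq ?enum_uniq //; apply: bin_mnm_inj. Qed.

Lemma mdeg_bin_mnm (b : {ffun 'I_n -> bool}) : mdeg (bin_mnm b) = #|[set i | b i]|.
Proof.
rewrite mdegE -sum1_card [RHS]big_mkcond /=.
by apply: eq_bigr => i _; rewrite mnmE inE; case: (b i).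
Qed.

Lemma count_rowsI_le k P :
  (count (fun I => (I <= P)%MM) (rowsI n k) <= 'C(msup P, k))%N.
Proof.
rewrite count_filter count_map; set A := preim _ _.
have -> : count A (enum {ffun 'I_n -> bool}) = #|A|.
  by rewrite cardE enumT /enum_mem size_filter.
rewrite /msup -cards_draws.
rewrite -(@card_in_imset _ _ (fun b : {ffun 'I_n -> bool} => [set i | b i]) A).
  apply: subset_leq_card; apply/subsetP => _ /imsetP [b /andP [leP degk] ->].
  rewrite inE -mdeg_bin_mnm degk andbT; apply/subsetP => i; rewrite !inE => bi.
  by move/mnm_lepP: leP => /(_ i); rewrite mnmE bi.
by move=> b b' _ _ /setP eq_bb'; apply/ffunP => i; move: (eq_bb' i); rewrite !inE.
Qed.

End Multinomials.

Local Open Scope ring_scope.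

Section GramTrace.
Context {R : numDomainType} {p q : nat} (a : 'M[R]_(p, q)) (m : R).
Hypothesis m_ge0 : 0 <= m.
Hypothesis a_ge0 : forall i j, 0 <= a i j.
Hypothesis a_le1 : forall i j, a i j <= 1.
Hypothesis row_sum_le : forall i, \sum_j a i j <= m.
Hypothesis col_sum_le : forall j, \sum_i a i j <= m.

Lemma gram_ge0 j l : 0 <= (a^T *m a) j l.
Proof. by rewrite mxE sumr_ge0 // => i _; rewrite mxE mulr_ge0. Qed.

Lemma gram_le j l : (a^T *m a) j l <= m.
Proof.
rewrite mxE; apply: le_trans (col_sum_le j); apply: ler_sum => i _.
by rewrite mxE -[leRHS]mulr1 ler_wpM2l.
Qed.

Lemma tr_gram_sq : \tr ((a^T *m a) *m (a^T *m a)) = \sum_j \sum_l (a^T *m a) j l ^+ 2.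
Proof.
apply: eq_bigr => j _; rewrite mxE; apply: eq_bigr => l _.
rewrite expr2; congr (_ * _); rewrite !mxE; apply: eq_bigr => i _.
by rewrite !mxE mulrC.
Qed.

Lemma sum_gram : \sum_j \sum_l (a^T *m a) j l = \sum_i (\sum_j a i j) ^+ 2.
Proof.
under eq_bigr => j _ do under eq_bigr => l _ do rewrite mxE.
under eq_bigr => j _ do rewrite exchange_big.
rewrite exchange_big; apply: eq_bigr => i _.
rewrite expr2 big_distrl; apply: eq_bigr => j _.
by rewrite big_distrr; apply: eq_bigr => l _; rewrite mxE.
Qed.

Lemma tr_gram_sq_le : \tr ((a^T *m a) *m (a^T *m a)) <= m ^+ 2 * \sum_i \sum_j a i j.
Proof.
have gram_sq_le j l : (a^T *m a) j l ^+ 2 <= m * (a^T *m a) j l.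
  by rewrite expr2 ler_wpM2r ?gram_ge0 ?gram_le.
have row_sq_le i : (\sum_j a i j) ^+ 2 <= m * \sum_j a i j.
  by rewrite expr2 ler_wpM2r ?row_sum_le ?sumr_ge0.
rewrite tr_gram_sq; apply: le_trans (_ : m * \sum_i (\sum_j a i j) ^+ 2 <= _).
  rewrite -sum_gram mulr_sumr; apply: ler_sum => j _.
  by rewrite mulr_sumr; apply: ler_sum => l _.
rewrite expr2 -mulrA ler_wpM2l // mulr_sumr; exact: ler_sum.
Qed.

End GramTrace.

Section IncidenceMatrix.
Context {R : realFieldType} {n : nat} (f : {mpoly R[n]}) (k : nat).
Hypothesis scoef01 : forall J : 'X_{1..n}, scoef f J = 0 \/ scoef f J = 1.

Lemma Mset_uniq : uniq (Mset f).
Proof. by rewrite filter_uniq // msupp_uniq. Qed.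

Lemma scoef_Mset (J : 'X_{1..n}) : scoef f J = (J \in Mset f)%:R.
Proof.
rewrite mem_filter mcoeff_msupp.
case: (scoef01 J) => sJ; rewrite sJ; first by rewrite (eq_sym 0) oner_eq0.
suff -> : f@_J != 0 by rewrite eqxx.
by apply/eqP => fJ0; move: sJ; rewrite /scoef fJ0 mulr0 => /eqP; rewrite (eq_sym 0) oner_eq0.
Qed.

Lemma MmatE i j : Mmat f k i j =
  ((nth 0%MM (rowsI n k) i + nth 0%MM (colsJ f k) j)%MM \in Mset f)%:R.
Proof. by rewrite mxE scoef_Mset. Qed.

Lemma Mmat_ge0 i j : 0 <= Mmat f k i j.
Proof. by rewrite MmatE ler0n. Qed.

Lemma Mmat_le1 i j : Mmat f k i j <= 1.
Proof. by rewrite MmatE lern1 leq_b1. Qed.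

Lemma Mmat_row_sum i : \sum_j Mmat f k i j =
  (count (fun J => (nth 0%MM (rowsI n k) i + J)%MM \in Mset f) (colsJ f k))%:R.
Proof.
under eq_bigr => j _ do rewrite MmatE.
by rewrite -sum_nat_of_bool natr_sum (big_nth 0%MM) big_mkord.
Qed.

Lemma Mmat_col_sum j : \sum_i Mmat f k i j =
  (count (fun I => (I + nth 0%MM (colsJ f k) j)%MM \in Mset f) (rowsI n k))%:R.
Proof.
under eq_bigr => i _ do rewrite MmatE.
by rewrite -sum_nat_of_bool natr_sum (big_nth 0%MM) big_mkord.
Qed.

Lemma Mmat_row_sum_le i : \sum_j Mmat f k i j <= (size (Mset f))%:R.
Proof.
rewrite Mmat_row_sum ler_nat; apply: count_inj_mem_le (undup_uniq _).
exact: addmI.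
Qed.

Lemma Mmat_col_sum_le j : \sum_i Mmat f k i j <= (size (Mset f))%:R.
Proof.
rewrite Mmat_col_sum ler_nat; apply: count_inj_mem_le (rowsI_uniq _).
exact: addIm.
Qed.

Lemma Mmat_sum_le :
  \sum_i \sum_j Mmat f k i j <= (\sum_(P <- Mset f) 'C(msup P, k))%N%:R.
Proof.
have -> : \sum_i \sum_j Mmat f k i j =
    (\sum_(I <- rowsI n k) count (fun J => (I + J)%MM \in Mset f) (colsJ f k))%:R.
  by rewrite natr_sum (big_nth 0%MM) big_mkord; apply: eq_bigr => i _; rewrite Mmat_row_sum.
rewrite ler_nat; apply: leq_trans (sum_count_addm_mem_le _ _ _ (undup_uniq _) Mset_uniq) _.
by apply: leq_sum => P _; apply: count_rowsI_le.
Qed.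

End IncidenceMatrix.

Theorem lemma3 (R : realFieldType) (n : nat) (f : {mpoly R[n]}) (k : nat)
  (hf0 : f != 0)
  (h01 : forall J : 'X_{1..n}, scoef f J = 0 \/ scoef f J = 1) :
  let B := (Mmat f k)^T *m Mmat f k in
  \tr (B *m B) <=
    ((size (Mset f)) ^ 2)%N%:R * (\sum_(P <- Mset f) 'C(msup P, k))%N%:R.
Proof.
cbv zeta; apply: le_trans (tr_gram_sq_le _ _ (ler0n _ _)
  (Mmat_ge0 _ _ h01) (Mmat_le1 _ _ h01)
  (Mmat_row_sum_le _ _ h01) (Mmat_col_sum_le _ _ h01)) _.
by rewrite natrX ler_wpM2l ?exprn_ge0 ?(Mmat_sum_le _ _ h01).
Qed.
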